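(* Assume $A$ is good. If $w\in\Sigma$ satisfies $I^*(w)<\infty$, then there exists $k\ge0$ with $\sigma^k(w)\in M$, i.e. $w$ is in a preimage of the support of the maximizing probability of $A^*$.
   Context: $\Sigma=\{0,1\}^{\mathbb N}$ with metric $d(u,v)=2^{-n}$, $n$ the first index of disagreement; $\sigma$ is the shift. $A^*:\Sigma\to\mathbb R$ is a Hölder potential (the dual potential of a Hölder $A$ via an involution kernel) with $m(A^* )=\max\{\int A^*d\nu:\nu \text{ $\sigma$-invariant}\}=0$; assume its maximizing probability $\mu^*_\infty$ is unique and supported on a single periodic orbit $M$ of $\sigma$. $V^*$ is a calibrated subaction for $A^*$: $V^*(w)=\max_{\sigma u=w}[V^*(u)+A^*(u)]$; $R^*(w)=V^*(\sigma w)-V^*(w)-A^*(w)\ge0$ and $I^*(w)=\sum_{n\ge0}R^*(\sigma^nw)\in[0,\infty]$. It is known (used here) that if $I^*(w)<\infty$ then $\frac1n\sum_{j<n}\delta_{\sigma^jw}\to\mu^*_\infty$ weakly. Let $P=\{w\notin M:\sigma(w)\in M\}$; $A$ is good if $R^*(w)>0$ for all $w\in P$. *)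

From Stdlib Require Import Reals Lra.
Open Scope R_scope.

Definition Sigma := nat -> bool.

Definition shift (w : Sigma) : Sigma := fun n => w (S n).

Definition shiftn (k : nat) (w : Sigma) : Sigma := Nat.iter k shift w.

(** The sequence b w (the two preimages of w under sigma are bcons false w, bcons true w). *)
Definition bcons (b : bool) (w : Sigma) : Sigma :=
  fun n => match n with O => b | S k => w k end.

(** [agree n u v]: u and v agree on the indices 0..n-1, i.e. d(u,v) <= 2^{-n}
    for the metric d(u,v) = 2^{-(first index of disagreement)}. *)
Definition agree (n : nat) (u v : Sigma) : Prop :=
  forall i, (i < n)%nat -> u i = v i.

Definition continuous_Sigma (f : Sigma -> R) : Prop :=
  forall u eps, 0 < eps -> exists n, forall v, agree n u v -> Rabs (f u - f v) < eps.

(** Hölder continuity: |f u - f v| <= C d(u,v)^alpha, written via agree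
    (d(u,v) <= 2^{-n} iff agree n u v). *)
Definition holder (f : Sigma -> R) : Prop :=
  exists C alpha, 0 < alpha /\
    forall n u v, agree n u v -> Rabs (f u - f v) <= C * Rpower (/2) (alpha * INR n).

(** sigma-invariant Borel probability measures on the compact space Sigma,
    represented (Riesz) as normalized positive sigma-invariant linear
    functionals on continuous functions. *)
Definition invariant_probability (L : (Sigma -> R) -> R) : Prop :=
  (forall f g a b, continuous_Sigma f -> continuous_Sigma g ->
      L (fun x => a * f x + b * g x) = a * L f + b * L g) /\
  (forall f, continuous_Sigma f -> (forall x, 0 <= f x) -> 0 <= L f) /\
  L (fun _ => 1) = 1 /\
  (forall f, continuous_Sigma f -> L (fun x => f (shift x)) = L f).

(** The periodic orbit M of x0 (period p, iter shift p x0 = x0). *)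
Definition orbit (x0 : Sigma) (w : Sigma) : Prop := exists i, w = shiftn i x0.

Definition orbit_measure (x0 : Sigma) (p : nat) (f : Sigma -> R) : R :=
  / INR p * sum_f_R0 (fun i => f (shiftn i x0)) (p - 1).

Definition calibrated (A V : Sigma -> R) : Prop :=
  forall w, V w = Rmax (V (bcons false w) + A (bcons false w))
                       (V (bcons true w) + A (bcons true w)).

Definition Rstar (A V : Sigma -> R) (w : Sigma) : R := V (shift w) - V w - A w.

Definition Istar_finite (A V : Sigma -> R) (w : Sigma) : Prop :=
  exists l, Un_cv (fun N => sum_f_R0 (fun n => Rstar A V (shiftn n w)) N) l.

Definition empirical_converges (w : Sigma) (mu : (Sigma -> R) -> R) : Prop :=
  forall f, continuous_Sigma f ->
    Un_cv (fun n => / INR (S n) * sum_f_R0 (fun j => f (shiftn j w)) n) (mu f).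

From Stdlib Require Import Reals Lra Lia List Classical ClassicalEpsilon FunctionalExtensionality.
Open Scope R_scope.

(* Suppose no iterate of [w] lies in [M].  The set [P] is finite and [R*] is continuous and
   positive on it, so [R* >= c > 0] on a whole cylinder of depth [N] around [P].  Since
   [I*(w)] is finite, [R*(sigma^m w) -> 0].  The orbit of [w] keeps coming [N]-close to [M]
   (otherwise its empirical measures could not tend to [mu*_oo]) and keeps leaving the
   [(N+1)]-neighbourhood of [M] (otherwise, once [N >= p], it would be [p]-periodic and
   shadow [M], hence lie in [M]).  At a time of re-entry, [sigma^m w] is not [(N+1)]-close
   to [M] while [sigma^(m+1) w] is [N]-close to it; then [sigma^m w] lies in the cylinder of
   depth [N+1] of a point of [P], so [R*(sigma^m w) >= c] for arbitrarily large [m]. *)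

Lemma shiftn_app k w j : shiftn k w j = w (k + j)%nat.
Proof.
  revert j; induction k as [|k IHk]; intro j; [reflexivity|].
  change (shiftn k w (S j) = w (S k + j)%nat); rewrite IHk; f_equal; lia.
Qed.

Lemma shiftn_add a b w : shiftn a (shiftn b w) = shiftn (a + b) w.
Proof. unfold shiftn; rewrite Nat.iter_add; reflexivity. Qed.

Lemma agree_le m n u v : (m <= n)%nat -> agree n u v -> agree m u v.
Proof. intros Hmn H i Hi; apply H; lia. Qed.

Lemma agree_sym n u v : agree n u v -> agree n v u.
Proof. intros H i Hi; symmetry; auto. Qed.

Lemma agree_trans n u v x : agree n u v -> agree n v x -> agree n u x.
Proof. intros H1 H2 i Hi; rewrite H1, H2; auto. Qed.

Lemma holder_continuous f : holder f -> continuous_Sigma f.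
Proof.
  intros [C [al [Hal H]]] u eps Heps.
  set (r := Rpower (/2) al).
  assert (Hr0 : 0 < r) by (unfold r, Rpower; apply exp_pos).
  assert (Hr1 : r < 1).
  { assert (Hln : ln (/2) < 0) by (rewrite <- ln_1; apply ln_increasing; lra).
    unfold r, Rpower; rewrite <- exp_0; apply exp_increasing; nra. }
  assert (HC : 0 < Rabs C + 1) by (pose proof (Rabs_pos C); lra).
  destruct (pow_lt_1_zero r ltac:(rewrite Rabs_pos_eq; lra) (eps / (Rabs C + 1)))
    as [N HN]; [apply Rdiv_lt_0_compat; lra|].
  exists N; intros v Hv.
  specialize (H N u v Hv); specialize (HN N (le_n _)).
  rewrite <- Rpower_mult, Rpower_pow in H by exact Hr0; fold r in H.
  rewrite Rabs_pos_eq in HN by (apply pow_le; lra).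
  apply Rmult_lt_compat_l with (r := Rabs C + 1) in HN; [|lra].
  unfold Rdiv in HN; rewrite <- Rmult_assoc, Rinv_r_simpl_m in HN by lra.
  pose proof (Rle_abs C); pose proof (pow_le r N ltac:(lra)); nra.
Qed.

Lemma continuous_comp_shift f : continuous_Sigma f -> continuous_Sigma (fun v => f (shift v)).
Proof.
  intros H u eps He; destruct (H (shift u) eps He) as [n Hn].
  exists (S n); intros v Hv; apply Hn; intros i Hi; apply (Hv (S i)); lia.
Qed.

Lemma continuous_minus f g :
  continuous_Sigma f -> continuous_Sigma g -> continuous_Sigma (fun v => f v - g v).
Proof.
  intros Hf Hg u eps He.
  destruct (Hf u (eps / 2)) as [n1 H1]; [lra|].
  destruct (Hg u (eps / 2)) as [n2 H2]; [lra|].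
  exists (max n1 n2); intros v Hv.
  specialize (H1 v (agree_le n1 (max n1 n2) u v ltac:(lia) Hv)).
  specialize (H2 v (agree_le n2 (max n1 n2) u v ltac:(lia) Hv)).
  apply Rabs_def2 in H1, H2; apply Rabs_def1; lra.
Qed.

Lemma continuous_Rstar A V :
  continuous_Sigma A -> continuous_Sigma V -> continuous_Sigma (Rstar A V).
Proof.
  intros HA HV; unfold Rstar.
  apply (continuous_minus (fun v => V (shift v) - V v)); [|exact HA].
  apply continuous_minus; [apply continuous_comp_shift|]; exact HV.
Qed.

Definition bounded_below_near (f : Sigma -> R) (q : Sigma) : Prop :=
  exists N c, 0 < c /\ forall v, agree N q v -> c <= f v.

Lemma bounded_below_near_of_pos f q :
  continuous_Sigma f -> 0 < f q -> bounded_below_near f q.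
Proof.
  intros Hf Hq; destruct (Hf q (f q / 2)) as [N HN]; [lra|].
  exists N, (f q / 2); split; [lra|]; intros v Hv; specialize (HN v Hv).
  unfold Rabs in HN; destruct Rcase_abs; lra.
Qed.

Lemma uniformly_bounded_below_near f (Q : Sigma -> Prop) (qs : list Sigma) :
  (forall q, In q qs -> Q q -> bounded_below_near f q) ->
  exists N c, 0 < c /\ forall q v, In q qs -> Q q -> agree N q v -> c <= f v.
Proof.
  induction qs as [|q qs IH]; intro Hqs.
  { exists O, 1; split; [lra|]; intros q v []. }
  destruct IH as [N [c [Hc HN]]]; [intros; apply Hqs; simpl; auto|].
  assert (Hq : exists N1 c1, 0 < c1 /\ (Q q -> forall v, agree N1 q v -> c1 <= f v)).
  { destruct (classic (Q q)) as [HQ|HQ].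
    - destruct (Hqs q (or_introl eq_refl) HQ) as [N1 [c1 [Hc1 H1]]].
      exists N1, c1; auto.
    - exists O, 1; split; [lra|]; tauto. }
  destruct Hq as [N1 [c1 [Hc1 H1]]].
  exists (max N N1), (Rmin c c1); split; [apply Rmin_glb_lt; auto|].
  intros q' v [<-|Hin] HQ Hv.
  - eapply Rle_trans; [apply Rmin_r|]; apply H1; auto; eapply agree_le; [|exact Hv]; lia.
  - eapply Rle_trans; [apply Rmin_l|]; apply (HN q'); auto; eapply agree_le; [|exact Hv]; lia.
Qed.

Definition indicator (P : Sigma -> Prop) (u : Sigma) : R :=
  if excluded_middle_informative (P u) then 1 else 0.

Lemma indicator_continuous (P : Sigma -> Prop) N :
  (forall u v, agree N u v -> P u -> P v) -> continuous_Sigma (indicator P).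
Proof.
  intros HP u eps He; exists N; intros v Hv.
  replace (indicator P u - indicator P v) with 0; [rewrite Rabs_R0; exact He|].
  unfold indicator.
  destruct excluded_middle_informative as [Hu|Hu];
    destruct excluded_middle_informative as [Hv'|Hv']; try lra; exfalso.
  - exact (Hv' (HP u v Hv Hu)).
  - exact (Hu (HP v u (agree_sym _ _ _ Hv) Hv')).
Qed.

Lemma series_terms_cv_0 (u : nat -> R) l :
  Un_cv (fun N => sum_f_R0 u N) l -> Un_cv u 0.
Proof.
  intro H; apply (CV_shift u 1).
  replace 0 with (l - l) by ring.
  apply (Un_cv_ext (fun n => sum_f_R0 u (n + 1) - sum_f_R0 u n)).
  { intro n; rewrite Nat.add_1_r; simpl; ring. }
  apply CV_minus; [apply (CV_shift' _ 1)|]; exact H.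
Qed.

Lemma cesaro_eventually_zero (g : nat -> R) T :
  (forall j, (T <= j)%nat -> g j = 0) ->
  Un_cv (fun n => / INR (S n) * sum_f_R0 g n) 0.
Proof.
  intro Hg.
  assert (Hg0 : Un_cv g 0).
  { intros eps He; exists T; intros n Hn; unfold R_dist.
    rewrite Hg by lia; rewrite Rminus_0_r, Rabs_R0; exact He. }
  apply (Un_cv_ext (fun n => sum_f_R0 g (Nat.pred (n + 1)) / INR (n + 1))).
  { intro n; rewrite Nat.add_1_r; simpl Nat.pred; unfold Rdiv; apply Rmult_comm. }
  exact (CV_shift' _ 1 _ (Cesaro_1 g 0 Hg0)).
Qed.

Lemma exists_crossing (P Q : nat -> Prop) a b :
  (forall n, Q n -> P n) -> ~ Q a -> (a < b)%nat -> P b ->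
  exists m, (a <= m)%nat /\ ~ Q m /\ P (S m).
Proof.
  intros HQP Ha; induction b as [|b IH]; intros Hab Hb; [lia|].
  destruct (Nat.eq_dec a b) as [<-|Hne]; [exists a; auto|].
  destruct (classic (Q b)) as [Hq|Hq].
  - apply IH; auto; lia.
  - exists b; repeat split; auto; lia.
Qed.

Definition periodic (p : nat) (u : Sigma) : Prop := forall j, u (j + p)%nat = u j.

Lemma periodic_eq p u v :
  (0 < p)%nat -> periodic p u -> periodic p v -> agree p u v -> u = v.
Proof.
  intros hp Hu Hv Ha; apply functional_extensionality; intro j.
  induction j as [j IH] using (well_founded_induction Wf_nat.lt_wf).
  destruct (Nat.lt_ge_cases j p) as [Hj|Hj]; [apply Ha; exact Hj|].
  replace j with ((j - p) + p)%nat by lia.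
  rewrite Hu, Hv; apply IH; lia.
Qed.

Definition near_orbit (x0 : Sigma) (K : nat) (u : Sigma) : Prop :=
  exists i, agree K u (shiftn i x0).

Lemma near_orbit_le x0 m n u : (m <= n)%nat -> near_orbit x0 n u -> near_orbit x0 m u.
Proof. intros Hmn [i Hi]; exists i; eapply agree_le; eauto. Qed.

Section PeriodicOrbit.

Variables (x0 : Sigma) (p : nat).
Hypotheses (hp : (0 < p)%nat) (hper : shiftn p x0 = x0).

Lemma orbit_periodic u : orbit x0 u -> periodic p u.
Proof.
  intros [i ->] j.
  rewrite !shiftn_app; replace (i + (j + p))%nat with (p + (i + j))%nat by lia.
  rewrite <- shiftn_app, hper; reflexivity.
Qed.

Lemma shiftn_mod_period i : shiftn i x0 = shiftn (i mod p) x0.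
Proof.
  assert (Hmul : forall r q, shiftn (r + p * q) x0 = shiftn r x0).
  { intros r q; induction q as [|q IH]; [f_equal; lia|].
    replace (r + p * S q)%nat with ((r + p * q) + p)%nat by lia.
    rewrite <- shiftn_add, hper; exact IH. }
  rewrite (Nat.div_mod_eq i p) at 1; rewrite Nat.add_comm; apply Hmul.
Qed.

(* A point whose whole forward orbit stays [(p+1)]-close to [M] is [p]-periodic, because
   each of its iterates copies the equality of coordinates [0] and [p] from an orbit point. *)
Lemma always_near_orbit_in_orbit u :
  (forall n, near_orbit x0 (S p) (shiftn n u)) -> orbit x0 u.
Proof.
  intro Hnear.
  assert (Hu : periodic p u).
  { intro j; destruct (Hnear j) as [i Hi].
    transitivity (shiftn j u 0%nat); [|rewrite shiftn_app; f_equal; lia].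
    rewrite <- shiftn_app, !Hi by lia.
    exact (orbit_periodic _ (ex_intro _ i eq_refl) 0%nat). }
  destruct (Hnear O) as [i Hi]; exists i.
  apply (periodic_eq p); auto.
  - apply orbit_periodic; exists i; reflexivity.
  - intros k Hk; apply (Hi k); lia.
Qed.

Lemma orbit_measure_one f : (forall i, f (shiftn i x0) = 1) -> orbit_measure x0 p f = 1.
Proof.
  intro Hf; unfold orbit_measure; rewrite (sum_eq _ (fun _ => 1)) by auto.
  rewrite sum_cte; replace (S (p - 1)) with p by lia.
  assert (0 < INR p) by (apply lt_0_INR; exact hp); field; lra.
Qed.

Definition orbit_preimages : list Sigma :=
  flat_map (fun i => bcons false (shiftn i x0) :: bcons true (shiftn i x0) :: nil) (seq 0 p).

Lemma entry_near_preimage u K :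
  near_orbit x0 K (shift u) -> ~ near_orbit x0 (S K) u ->
  exists q, In q orbit_preimages /\ ~ orbit x0 q /\ orbit x0 (shift q) /\ agree (S K) q u.
Proof.
  intros [i Hi] Hfar.
  set (q := bcons (u O) (shiftn (i mod p) x0)).
  assert (Hqu : agree (S K) q u).
  { intros [|k] Hk; [reflexivity|].
    unfold q; simpl; rewrite <- shiftn_mod_period; symmetry; apply Hi; lia. }
  exists q; repeat split.
  - apply in_flat_map; exists (i mod p); split.
    + apply in_seq; pose proof (Nat.mod_upper_bound i p ltac:(lia)); lia.
    + unfold q; destruct (u O); simpl; auto.
  - intros [j Hj]; apply Hfar; exists j; rewrite <- Hj; apply agree_sym; exact Hqu.
  - exists (i mod p); reflexivity.
  - exact Hqu.
Qed.

Lemma near_orbit_infinitely_often w K :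
  empirical_converges w (orbit_measure x0 p) ->
  forall T, exists b, (T <= b)%nat /\ near_orbit x0 K (shiftn b w).
Proof.
  intros Hemp T; apply NNPP; intro Hnot.
  set (f := indicator (near_orbit x0 K)).
  assert (Hfc : continuous_Sigma f).
  { apply (indicator_continuous _ K); intros u v Huv [i Hi].
    exists i; eapply agree_trans; [apply agree_sym, Huv|exact Hi]. }
  assert (Hf1 : orbit_measure x0 p f = 1).
  { apply orbit_measure_one; intro i; unfold f, indicator.
    destruct excluded_middle_informative as [_|Hn]; [reflexivity|].
    exfalso; apply Hn; exists i; intros k _; reflexivity. }
  assert (Hf0 : Un_cv (fun n => / INR (S n) * sum_f_R0 (fun j => f (shiftn j w)) n) 0).
  { apply (cesaro_eventually_zero _ T); intros j Hj; unfold f, indicator.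
    destruct excluded_middle_informative as [Hn|_]; [|reflexivity].
    exfalso; apply Hnot; exists j; auto. }
  pose proof (Hemp f Hfc) as Hcv; rewrite Hf1 in Hcv.
  pose proof (UL_sequence _ _ _ Hf0 Hcv); lra.
Qed.

Lemma far_from_orbit_infinitely_often w K :
  (p < K)%nat -> (forall k, ~ orbit x0 (shiftn k w)) ->
  forall T, exists a, (T <= a)%nat /\ ~ near_orbit x0 K (shiftn a w).
Proof.
  intros HK Hno T; apply NNPP; intro Hnot.
  apply (Hno T), always_near_orbit_in_orbit; intro n.
  apply (near_orbit_le _ _ K); [lia|].
  rewrite shiftn_add; apply NNPP; intro Hn.
  apply Hnot; exists (n + T)%nat; split; [lia|exact Hn].
Qed.

End PeriodicOrbit.

Theorem mainTheorem5
  (Astar Vstar : Sigma -> R) (x0 : Sigma) (p : nat)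
  (hA : holder Astar)
  (hp : (0 < p)%nat) (hper : shiftn p x0 = x0)
  (hm_le : forall L, invariant_probability L -> L Astar <= 0)
  (hm_att : exists L, invariant_probability L /\ L Astar = 0)
  (hmax : forall L, invariant_probability L -> L Astar = 0 ->
            forall f, continuous_Sigma f -> L f = orbit_measure x0 p f)
  (hVc : continuous_Sigma Vstar) (hcal : calibrated Astar Vstar)
  (hknown : forall w, Istar_finite Astar Vstar w ->
              empirical_converges w (orbit_measure x0 p))
  (hgood : forall w, ~ orbit x0 w -> orbit x0 (shift w) -> 0 < Rstar Astar Vstar w)
  (w : Sigma) (hI : Istar_finite Astar Vstar w) :
  exists k : nat, orbit x0 (shiftn k w).
Proof.
  apply NNPP; intro Hno.
  assert (Hno' : forall k, ~ orbit x0 (shiftn k w)) by (intros k Hk; apply Hno; exists k; exact Hk).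
  pose proof (continuous_Rstar _ _ (holder_continuous _ hA) hVc) as HRc.
  destruct (uniformly_bounded_below_near (Rstar Astar Vstar)
              (fun q => ~ orbit x0 q /\ orbit x0 (shift q)) (orbit_preimages x0 p))
    as [N [c [Hc Hbound]]].
  { intros q _ [H1 H2]; apply bounded_below_near_of_pos; auto. }
  set (K := max N p).
  destruct hI as [l Hl].
  destruct (series_terms_cv_0 _ l Hl c Hc) as [T HT].
  destruct (far_from_orbit_infinitely_often x0 p hp hper w (S K) ltac:(lia) Hno' T)
    as [a [Ha Hfar]].
  destruct (near_orbit_infinitely_often x0 p hp w K (hknown w (ex_intro _ l Hl)) (S a))
    as [b [Hb Hnear]].
  destruct (exists_crossing (fun n => near_orbit x0 K (shiftn n w))
              (fun n => near_orbit x0 (S K) (shiftn n w)) a b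
              (fun n => near_orbit_le x0 K (S K) _ (Nat.le_succ_diag_r K)) Hfar ltac:(lia) Hnear)
    as [m [Ham [Hm_far Hm_near]]].
  destruct (entry_near_preimage x0 p hp hper (shiftn m w) K Hm_near Hm_far)
    as [q [Hq [Hq1 [Hq2 Hqm]]]].
  assert (c <= Rstar Astar Vstar (shiftn m w))
    by (apply (Hbound q); auto; eapply agree_le; [|exact Hqm]; lia).
  specialize (HT m ltac:(lia)); unfold R_dist in HT; rewrite Rminus_0_r in HT.
  pose proof (Rle_abs (Rstar Astar Vstar (shiftn m w))); lra.
Qed.
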